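(* For all integers $N\ge2$ and real $0<\theta<2\pi$, $$\prod_{j=1}^N\big|e^{ij\theta/N}-1\big|^{-1}<\frac{2N}{\theta\sin(\theta/2)}\exp\Big(N\frac{\mathrm{Cl}_2(\theta)}{\theta}\Big).$$
   Context: $\mathrm{Cl}_2(\theta):=\sum_{k\ge1}k^{-2}\sin(k\theta)$ is the Clausen function. *)

From Stdlib Require Import Reals.
Open Scope R_scope.

(* Modulus of the complex number e^{i x} - 1 = (cos x - 1) + i sin x. *)
Definition abs_expi_minus1 (x : R) : R :=
  sqrt ((cos x - 1) ^ 2 + (sin x) ^ 2).

(* k-th term (k >= 1, indexed from 0 as n = k - 1) of the Clausen series
   Cl_2(theta) = sum_{k>=1} sin(k theta)/k^2. *)
Definition clausen_term (theta : R) (n : nat) : R :=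
  sin (INR (S n) * theta) / (INR (S n)) ^ 2.

Fixpoint prod_1_to (N : nat) (f : nat -> R) : R :=
  match N with
  | O => 1
  | S m => prod_1_to m f * f (S m)
  end.

(* Write F(y) = -ln |e^{iy} - 1| = -1/2 ln (2 - 2 cos y), so that the product is
   exp (sum_{j=1}^N F(jh)) with h = theta/N.  On (0, 2 pi) one has Cl_2' = F: by Abel
   summation, C_r(y) = sum_k r^k sin(ky)/k^2 has derivative -ln |1 - r e^{iy}| (a power
   series in r), and these derivatives converge locally uniformly as r -> 1.
   Since F is convex, h F(jh) is at most the increment of Cl_2 over [jh - h/2, jh + h/2].
   Summing over j < N and bounding the two remaining half cells with F >= -ln 2 and
   F(y) >= -ln y gives sum_{j<N} F(jh) <= Cl_2(theta)/h - 1/2 + (ln h)/2.  Adding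
   F(theta) = -ln 2 - ln sin(theta/2), the claim reduces to 3 ln h < 4 ln 2 + 1,
   which holds because h < pi. *)

From Stdlib Require Import Reals Lra Lia Psatz.
From Coquelicot Require Import Coquelicot.
Open Scope R_scope.

Lemma Rabs_sum_f_R0_le (d : nat -> R) (c : R) (m : nat) :
  (forall k, (k <= m)%nat -> Rabs (d k) <= c) ->
  Rabs (sum_f_R0 d m) <= INR (S m) * c.
Proof.
  induction m as [|m IH]; intros H; simpl sum_f_R0.
  - specialize (H 0%nat (le_n _)). simpl. lra.
  - rewrite S_INR.
    assert (Hm := H (S m) (le_n _)).
    assert (IHm : Rabs (sum_f_R0 d m) <= INR (S m) * c) by (apply IH; intros; apply H; lia).
    assert (T := Rabs_triang (sum_f_R0 d m) (d (S m))). lra.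
Qed.

Lemma Rabs_sum_f_R0_diff_le (a b : nat -> R) (n p : nat) :
  (forall k, Rabs (a k) <= b k) ->
  Rabs (sum_f_R0 a (n + p) - sum_f_R0 a n) <= sum_f_R0 b (n + p) - sum_f_R0 b n.
Proof.
  intros H. induction p as [|p IH].
  - rewrite Nat.add_0_r, !Rminus_diag, Rabs_R0. lra.
  - rewrite Nat.add_succ_r. simpl sum_f_R0.
    assert (T := Rabs_triang (sum_f_R0 a (n + p) - sum_f_R0 a n) (a (S (n + p)))).
    replace (sum_f_R0 a (n + p) + a (S (n + p)) - sum_f_R0 a n)
      with (sum_f_R0 a (n + p) - sum_f_R0 a n + a (S (n + p))) by ring.
    specialize (H (S (n + p))). lra.
Qed.

Lemma infinite_sum_tail_le (a b : nat -> R) (l L : R) (n : nat) :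
  (forall k, Rabs (a k) <= b k) -> infinite_sum a l -> infinite_sum b L ->
  Rabs (l - sum_f_R0 a n) <= L - sum_f_R0 b n.
Proof.
  intros H Ha Hb. apply Rnot_lt_le; intro Hc.
  set (e := (Rabs (l - sum_f_R0 a n) - (L - sum_f_R0 b n)) / 3).
  destruct (Ha e ltac:(unfold e; lra)) as [Na HNa].
  destruct (Hb e ltac:(unfold e; lra)) as [Nb HNb].
  set (m := (n + (Na + Nb))%nat).
  assert (Am := HNa m ltac:(unfold m; lia)). assert (Bm := HNb m ltac:(unfold m; lia)).
  unfold R_dist in Am, Bm.
  assert (D := Rabs_sum_f_R0_diff_le a b n (Na + Nb) H). fold m in D.
  assert (T := Rabs_triang (l - sum_f_R0 a m) (sum_f_R0 a m - sum_f_R0 a n)).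
  replace (l - sum_f_R0 a m + (sum_f_R0 a m - sum_f_R0 a n)) with (l - sum_f_R0 a n)
    in T by ring.
  rewrite (Rabs_minus_sym l (sum_f_R0 a m)) in T.
  assert (Hb' := Rle_abs (sum_f_R0 b m - L)).
  unfold e in Am, Bm. lra.
Qed.

Lemma infinite_sum_tail_lt (a b : nat -> R) (l L eps : R) (n : nat) :
  (forall k, Rabs (a k) <= b k) -> infinite_sum a l -> infinite_sum b L ->
  R_dist (sum_f_R0 b n) L < eps -> Rabs (l - sum_f_R0 a n) < eps.
Proof.
  intros H Ha Hb Hn. unfold R_dist in Hn.
  assert (T := infinite_sum_tail_le a b l L n H Ha Hb).
  assert (Hb' := Rle_abs (- (sum_f_R0 b n - L))). rewrite Rabs_Ropp in Hb'. lra.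
Qed.

Lemma inv_sq_summable : exists L, infinite_sum (fun n => / INR (S n) ^ 2) L.
Proof.
  set (u := fun n => / INR (S n) ^ 2).
  assert (Hu : forall n, 0 < u n) by (intro n; apply Rinv_0_lt_compat, pow_lt, lt_0_INR; lia).
  (* 1/(n+1)^2 <= 1/n - 1/(n+1) telescopes *)
  assert (Hb : forall n, sum_f_R0 u n <= 2 - / INR (S n)).
  { induction n as [|n IH]; [simpl; unfold u; simpl; lra|].
    rewrite tech5. unfold u at 2. rewrite (S_INR (S n)).
    assert (h : 0 < INR (S n)) by (apply lt_0_INR; lia).
    assert (/ (INR (S n) + 1) ^ 2 <= / INR (S n) - / (INR (S n) + 1)).
    { apply (Rmult_le_reg_r (INR (S n) * (INR (S n) + 1) ^ 2)).
      - apply Rmult_lt_0_compat; [lra | apply pow_lt; lra].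
      - field_simplify; lra. }
    lra. }
  destruct (growing_cv (sum_f_R0 u)) as [L HL].
  - intro n. rewrite tech5. specialize (Hu (S n)). lra.
  - exists 2. intros x [n ->]. specialize (Hb n).
    assert (0 < / INR (S n)) by (apply Rinv_0_lt_compat, lt_0_INR; lia). lra.
  - exists L. exact HL.
Qed.

Lemma derivable_pt_lim_Series (u u' : nat -> R -> R) (B : nat -> R) (LB : R) (G : R -> R) :
  (forall n y, derivable_pt_lim (u n) y (u' n y)) ->
  (forall n y, Rabs (u' n y) <= B n) -> infinite_sum B LB ->
  (forall y, ex_series (fun n => u n y)) ->
  (forall y, infinite_sum (fun n => u' n y) (G y)) ->
  forall x, derivable_pt_lim (fun y => Series (fun n => u n y)) x (G x).
Proof.
  intros Hd Hb HB Hex HG x.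
  apply (CVU_derivable (fun n y => sum_f_R0 (fun k => u k y) n)
    (fun n y => sum_f_R0 (fun k => u' k y) n) _ G x (mkposreal 1 Rlt_0_1)).
  - intros eps He. destruct (HB eps He) as [N HN]. exists N. intros n y Hn _.
    exact (infinite_sum_tail_lt _ B _ LB eps n (fun k => Hb k y) (HG y) HB (HN n Hn)).
  - intros y _. apply is_series_Reals, Series_correct, Hex.
  - intros n y _. induction n as [|n IH]; simpl.
    + apply Hd.
    + apply derivable_pt_lim_plus; [exact IH | apply Hd].
  - unfold Boule. simpl. rewrite Rminus_diag, Rabs_R0. lra.
Qed.

Lemma is_derive_lower_bound (f f' : R -> R) (c a b : R) : a <= b ->
  (forall t, a <= t <= b -> is_derive f t (f' t)) ->
  (forall t, a <= t <= b -> c <= f' t) ->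
  c * (b - a) <= f b - f a.
Proof.
  intros Hab Hd Hc.
  destruct (MVT_gen f a b f') as [t [Ht ->]];
    rewrite Rmin_left, Rmax_right in * by lra.
  - intros t Ht. apply Hd. lra.
  - intros t Ht. apply derivable_continuous_pt. exists (f' t).
    apply is_derive_Reals, Hd, Ht.
  - apply Rmult_le_compat_r; [lra | apply Hc, Ht].
Qed.

Lemma INR_S_pos n : 0 < INR (S n).
Proof. apply lt_0_INR. lia. Qed.

Lemma INR_S_ge_1 n : 1 <= INR (S n).
Proof. apply (le_INR 1). lia. Qed.

Lemma Rabs_div_le_1 (t k : R) : Rabs t <= 1 -> 1 <= k -> Rabs (t / k) <= 1.
Proof.
  intros Ht Hk. unfold Rdiv. rewrite Rabs_mult, Rabs_inv, (Rabs_pos_eq k) by lra.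
  assert (0 < / k <= 1) by (split; [apply Rinv_0_lt_compat | rewrite <- Rinv_1;
    apply Rinv_le_contravar]; lra).
  assert (0 <= Rabs t) by apply Rabs_pos. nra.
Qed.

Lemma pow_le_1 r n : 0 <= r <= 1 -> r ^ n <= 1.
Proof. intros Hr. rewrite <- (pow1 n). apply pow_incr. exact Hr. Qed.

Lemma ln_le_sub_1 x : 0 < x -> ln x <= x - 1.
Proof. intros Hx. assert (H := exp_ineq1_le (ln x)). rewrite exp_ln in H by lra. lra. Qed.

(** * The power series of -ln |1 - r e^{ix}| *)

Definition neg_ln_abs (r x : R) : R := - / 2 * ln (1 - 2 * r * cos x + r ^ 2).

Definition cos_coef (x : R) (k : nat) : R :=
  match k with O => 0 | S n => cos (INR (S n) * x) / INR (S n) end.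

Lemma one_sub_2rcos_pos (r x : R) : Rabs r < 1 -> 0 < 1 - 2 * r * cos x + r ^ 2.
Proof.
  intros Hr. destruct (COS_bound x). apply Rabs_def2 in Hr.
  destruct (Rle_or_lt 0 r); simpl; nra.
Qed.

Lemma ex_series_cos_mul_pow (x r : R) : Rabs r < 1 ->
  ex_series (fun n => cos (INR (S n) * x) * r ^ n).
Proof.
  intros Hr.
  apply (@ex_series_le R_AbsRing R_CompleteNormedModule _ (fun n => Rabs r ^ n)).
  - intro n. change norm with Rabs. rewrite Rabs_mult, <- RPow_abs.
    assert (Rabs (cos (INR (S n) * x)) <= 1) by apply Rabs_le, COS_bound.
    assert (0 <= Rabs r ^ n) by apply pow_le, Rabs_pos. nra.
  - apply ex_series_geom. rewrite Rabs_Rabsolu. exact Hr.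
Qed.

(* The coefficients obey c_{n+2} = 2 cos x c_{n+1} - c_n, which makes the series
   a rational function of r. *)
Lemma Series_cos_mul_pow (x r : R) : Rabs r < 1 ->
  Series (fun n => cos (INR (S n) * x) * r ^ n) * (1 - 2 * r * cos x + r ^ 2) = cos x - r.
Proof.
  intros Hr.
  set (u := fun n => cos (INR (S n) * x) * r ^ n).
  assert (Hu : ex_series u) by apply ex_series_cos_mul_pow, Hr.
  assert (Hu1 : ex_series (fun k => u (S k))) by apply (proj1 (ex_series_incr_1 u)), Hu.
  assert (E1 := Series_incr_1 u Hu). assert (E2 := Series_incr_1 _ Hu1).
  assert (E3 : Series (fun k => u (S (S k))) =
               2 * cos x * r * Series (fun k => u (S k)) - r ^ 2 * Series u).
  { rewrite <- !Series_scal_l, <- Series_minus.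
    2: exact (@ex_series_scal_l R_AbsRing R_NormedModule _ _ Hu1).
    2: exact (@ex_series_scal_l R_AbsRing R_NormedModule _ _ Hu).
    apply Series_ext. intro n. unfold u.
    replace (INR (S (S (S n))) * x) with (INR (S (S n)) * x + x) by (rewrite !S_INR; ring).
    replace (INR (S n) * x) with (INR (S (S n)) * x - x) by (rewrite !S_INR; ring).
    rewrite cos_plus, cos_minus. simpl pow. ring. }
  assert (U0 : u 0%nat = cos x) by (unfold u; simpl; rewrite Rmult_1_l; ring).
  assert (U1 : u 1%nat = (2 * cos x ^ 2 - 1) * r).
  { unfold u. replace (INR 2 * x) with (2 * x) by (simpl; ring).
    rewrite cos_2a_cos. simpl. ring. }
  cbv beta in E2. rewrite U0 in E1. rewrite U1, E3 in E2. nra.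
Qed.

Lemma CV_radius_cos_coef (x : R) : Rbar_le 1 (CV_radius (cos_coef x)).
Proof.
  apply CV_radius_bounded. exists 1. intros n. rewrite pow1, Rmult_1_r.
  destruct n as [|n]; simpl cos_coef.
  - rewrite Rabs_R0. lra.
  - apply Rabs_div_le_1; [apply Rabs_le, COS_bound | apply INR_S_ge_1].
Qed.

Lemma is_derive_PSeries_cos_coef (x y : R) : Rabs y < 1 ->
  is_derive (PSeries (cos_coef x)) y ((cos x - y) / (1 - 2 * y * cos x + y ^ 2)).
Proof.
  intros Hy.
  assert (HD := one_sub_2rcos_pos y x Hy).
  assert (Hrad : Rbar_lt (Rabs y) (CV_radius (cos_coef x)))
    by (apply (Rbar_lt_le_trans _ 1); [exact Hy | apply CV_radius_cos_coef]).
  replace ((cos x - y) / (1 - 2 * y * cos x + y ^ 2))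
    with (PSeries (PS_derive (cos_coef x)) y).
  - apply is_derive_PSeries, Hrad.
  - rewrite <- (Series_cos_mul_pow x y Hy). unfold PSeries.
    field_simplify; [|lra]. apply Series_ext. intro n.
    unfold PS_derive, cos_coef. field. apply not_0_INR. lia.
Qed.

Lemma PSeries_cos_coef (x r : R) : 0 <= r < 1 -> PSeries (cos_coef x) r = neg_ln_abs r x.
Proof.
  intros Hr.
  set (phi := fun y => PSeries (cos_coef x) y - neg_ln_abs y x).
  assert (Hphi : phi r = phi 0).
  { destruct (Req_dec r 0) as [->|Hr0]; [reflexivity|].
    symmetry. apply (eq_is_derive phi 0 r); [|lra].
    intros t Ht. assert (Htabs : Rabs t < 1) by (apply Rabs_def1; lra).
    assert (HD := one_sub_2rcos_pos t x Htabs).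
    change (is_derive phi t 0).
    replace 0 with ((cos x - t) / (1 - 2 * t * cos x + t ^ 2)
                    - (cos x - t) / (1 - 2 * t * cos x + t ^ 2)) by ring.
    apply (is_derive_minus (PSeries (cos_coef x)) (fun y => neg_ln_abs y x));
      [apply is_derive_PSeries_cos_coef, Htabs|].
    unfold neg_ln_abs. auto_derive; [lra | field; lra]. }
  unfold phi in Hphi. rewrite PSeries_0 in Hphi. simpl cos_coef in Hphi.
  unfold neg_ln_abs in Hphi at 2.
  replace (1 - 2 * 0 * cos x + 0 ^ 2) with 1 in Hphi by ring.
  rewrite ln_1 in Hphi. lra.
Qed.

Definition abel_cos_term (r x : R) (n : nat) : R := r ^ S n * (cos (INR (S n) * x) / INR (S n)).

Lemma infinite_sum_abel_cos_term (r x : R) : 0 <= r < 1 ->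
  infinite_sum (abel_cos_term r x) (neg_ln_abs r x).
Proof.
  intros Hr. rewrite <- PSeries_cos_coef by exact Hr.
  assert (Hr1 : Rabs r < 1) by (rewrite Rabs_pos_eq; lra).
  assert (Hs : is_series (fun n => cos_coef x n * r ^ n) (PSeries (cos_coef x) r)).
  { apply is_pseries_R, PSeries_correct, CV_radius_inside.
    apply (Rbar_lt_le_trans _ 1); [exact Hr1 | apply CV_radius_cos_coef]. }
  apply is_series_Reals.
  apply (is_series_ext (fun n => cos_coef x (S n) * r ^ S n)).
  { intro n. unfold abel_cos_term. simpl. ring. }
  apply (is_series_incr_1 (fun n => cos_coef x n * r ^ n)).
  replace (plus _ _) with (PSeries (cos_coef x) r); [exact Hs|].
  simpl. change plus with Rplus. ring.
Qed.

(** * Abel means of the Clausen series *)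

Definition abel_term (r y : R) (n : nat) : R := r ^ S n * clausen_term y n.

Definition clausen_abel (r y : R) : R := Series (abel_term r y).

Definition clausen (y : R) : R := Series (clausen_term y).

Lemma Rabs_clausen_term_le y n : Rabs (clausen_term y n) <= / INR (S n) ^ 2.
Proof.
  unfold clausen_term, Rdiv.
  assert (Hn : 0 < INR (S n) ^ 2) by apply pow_lt, INR_S_pos.
  rewrite Rabs_mult, Rabs_inv, (Rabs_pos_eq (INR (S n) ^ 2)) by lra.
  assert (Rabs (sin (INR (S n) * y)) <= 1) by apply Rabs_le, SIN_bound.
  assert (0 < / INR (S n) ^ 2) by apply Rinv_0_lt_compat, Hn. nra.
Qed.

Lemma Rabs_abel_term_le r y n : 0 <= r <= 1 -> Rabs (abel_term r y n) <= / INR (S n) ^ 2.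
Proof.
  intros Hr. unfold abel_term. rewrite Rabs_mult, (Rabs_pos_eq (r ^ S n)) by (apply pow_le; lra).
  assert (r ^ S n <= 1) by apply pow_le_1, Hr.
  assert (0 <= r ^ S n) by (apply pow_le; lra).
  assert (Hc := Rabs_clausen_term_le y n). assert (0 <= Rabs (clausen_term y n)) by apply Rabs_pos.
  nra.
Qed.

Lemma infinite_sum_abel_term r y : 0 <= r <= 1 -> infinite_sum (abel_term r y) (clausen_abel r y).
Proof.
  intros Hr. destruct inv_sq_summable as [L HL].
  apply is_series_Reals, Series_correct.
  apply (@ex_series_le R_AbsRing R_CompleteNormedModule _ (fun n => / INR (S n) ^ 2)).
  - intro n. apply Rabs_abel_term_le, Hr.
  - exists L. apply is_series_Reals, HL.
Qed.

Lemma abel_term_1 y : abel_term 1 y = clausen_term y.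
Proof.
  apply FunctionalExtensionality.functional_extensionality. intro n.
  unfold abel_term. rewrite pow1. ring.
Qed.

Lemma clausen_abel_1 y : clausen_abel 1 y = clausen y.
Proof. unfold clausen_abel, clausen. rewrite abel_term_1. reflexivity. Qed.

Lemma infinite_sum_clausen_term y : infinite_sum (clausen_term y) (clausen y).
Proof.
  rewrite <- clausen_abel_1, <- abel_term_1. apply infinite_sum_abel_term. lra.
Qed.

Lemma derivable_pt_lim_abel_term r y n :
  derivable_pt_lim (fun y => abel_term r y n) y (abel_cos_term r y n).
Proof.
  apply is_derive_Reals. unfold abel_term, clausen_term, abel_cos_term.
  assert (h := INR_S_pos n). set (k := INR (S n)) in *. clearbody k.
  auto_derive; [auto | simpl; field; lra].
Qed.

Lemma Rabs_abel_cos_term_le r y n : 0 <= r <= 1 -> Rabs (abel_cos_term r y n) <= r ^ n.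
Proof.
  intros Hr. unfold abel_cos_term. rewrite Rabs_mult, Rabs_pos_eq by (apply pow_le; lra).
  assert (Hc : Rabs (cos (INR (S n) * y) / INR (S n)) <= 1)
    by (apply Rabs_div_le_1; [apply Rabs_le, COS_bound | apply INR_S_ge_1]).
  assert (0 <= Rabs (cos (INR (S n) * y) / INR (S n))) by apply Rabs_pos.
  assert (0 <= r ^ n) by (apply pow_le; lra).
  assert (0 <= r ^ S n <= r ^ n) by (simpl; split; nra). nra.
Qed.

Lemma derivable_pt_lim_clausen_abel r x : 0 <= r < 1 ->
  derivable_pt_lim (clausen_abel r) x (neg_ln_abs r x).
Proof.
  intros Hr.
  apply (derivable_pt_lim_Series (fun n y => abel_term r y n) (fun n y => abel_cos_term r y n)
           (fun n => r ^ n) (/ (1 - r)) (neg_ln_abs r)).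
  - intros n y. apply derivable_pt_lim_abel_term.
  - intros n y. apply Rabs_abel_cos_term_le. lra.
  - apply is_series_Reals, is_series_geom. rewrite Rabs_pos_eq; lra.
  - intros y. eexists. apply is_series_Reals, infinite_sum_abel_term. lra.
  - intros y. apply infinite_sum_abel_cos_term, Hr.
Qed.

Lemma clausen_abel_tail_uniform eps : 0 < eps -> exists m, forall r y, 0 <= r <= 1 ->
  Rabs (clausen_abel r y - sum_f_R0 (abel_term r y) m) < eps.
Proof.
  intros He. destruct inv_sq_summable as [L HL].
  destruct (HL eps He) as [m Hm]. exists m. intros r y Hr.
  exact (infinite_sum_tail_lt _ _ _ L eps m (fun n => Rabs_abel_term_le r y n Hr)
           (infinite_sum_abel_term r y Hr) HL (Hm m (le_n m))).
Qed.

Lemma one_sub_pow_le r n : 0 <= r <= 1 -> 1 - r ^ n <= INR n * (1 - r).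
Proof.
  intros Hr. induction n as [|n IH]; [simpl; lra|].
  rewrite S_INR. simpl pow. assert (r ^ n <= 1) by apply pow_le_1, Hr.
  assert (0 <= r ^ n) by (apply pow_le; lra). nra.
Qed.

Lemma Rabs_abel_term_sub_le r y k : 0 <= r <= 1 ->
  Rabs (abel_term r y k - abel_term 1 y k) <= INR (S k) * (1 - r).
Proof.
  intros Hr. unfold abel_term. rewrite pow1, <- Rmult_minus_distr_r, Rabs_mult.
  assert (Hc : Rabs (clausen_term y k) <= 1).
  { apply Rabs_div_le_1; [apply Rabs_le, SIN_bound|].
    assert (h := INR_S_ge_1 k). rewrite <- (pow1 2). apply pow_incr. lra. }
  assert (0 <= Rabs (clausen_term y k)) by apply Rabs_pos.
  assert (r ^ S k <= 1) by apply pow_le_1, Hr.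
  rewrite Rabs_left1 by lra.
  assert (Hb := one_sub_pow_le r (S k) Hr). nra.
Qed.

Definition abel_radius (n : nat) : R := 1 - / INR (n + 2).

Lemma abel_radius_bounds n : 1 / 2 <= abel_radius n < 1.
Proof.
  unfold abel_radius. assert (h : 2 <= INR (n + 2)).
  { rewrite plus_INR. simpl. assert (0 <= INR n) by apply pos_INR. lra. }
  assert (0 < / INR (n + 2)) by (apply Rinv_0_lt_compat; lra).
  assert (/ INR (n + 2) <= / 2) by (apply Rinv_le_contravar; lra). lra.
Qed.

Lemma abel_radius_gap N n : (0 < N)%nat -> (N <= n)%nat -> 1 - abel_radius n <= / INR N.
Proof.
  intros HN Hn. unfold abel_radius. replace (1 - (1 - / INR (n + 2))) with (/ INR (n + 2)) by ring.
  apply Rinv_le_contravar; [apply lt_0_INR | apply le_INR]; lia.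
Qed.

Lemma Un_cv_clausen_abel y : Un_cv (fun n => clausen_abel (abel_radius n) y) (clausen y).
Proof.
  rewrite <- clausen_abel_1. intros eps He.
  destruct (clausen_abel_tail_uniform (eps / 3)) as [m Hm]; [lra|].
  set (K := INR (S m) * INR (S m)).
  assert (HK : 0 < K) by (unfold K; assert (h := INR_S_pos m); nra).
  destruct (archimed_cor1 (eps / 3 / K)) as [N [HN HN0]]; [apply Rdiv_lt_0_compat; lra|].
  exists N. intros n Hn. unfold R_dist.
  assert (Hr := abel_radius_bounds n). set (r := abel_radius n) in *.
  assert (Hgap : K * (1 - r) < eps / 3).
  { apply Rle_lt_trans with (K * / INR N).
    - apply Rmult_le_compat_l; [lra | apply abel_radius_gap; lia].
    - replace (eps / 3) with (K * (eps / 3 / K)) by (field; lra).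
      apply Rmult_lt_compat_l; lra. }
  assert (Hmid : Rabs (sum_f_R0 (abel_term r y) m - sum_f_R0 (abel_term 1 y) m) <= K * (1 - r)).
  { rewrite <- minus_sum. unfold K. rewrite Rmult_assoc. apply Rabs_sum_f_R0_le.
    intros k Hk. eapply Rle_trans; [apply Rabs_abel_term_sub_le; lra|].
    apply Rmult_le_compat_r; [lra | apply le_INR; lia]. }
  assert (T1 := Hm r y ltac:(lra)). assert (T2 := Hm 1 y ltac:(lra)).
  set (sr := sum_f_R0 (abel_term r y) m) in *. set (s1 := sum_f_R0 (abel_term 1 y) m) in *.
  assert (T := Rabs_triang (clausen_abel r y - sr) (sr - s1)).
  assert (T' := Rabs_triang (clausen_abel r y - sr + (sr - s1)) (- (clausen_abel 1 y - s1))).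
  rewrite Rabs_Ropp in T'.
  replace (clausen_abel r y - sr + (sr - s1) + - (clausen_abel 1 y - s1))
    with (clausen_abel r y - clausen_abel 1 y) in T' by ring.
  lra.
Qed.

Lemma ln_sub_le p q m : 0 < m <= p -> p <= q -> ln q - ln p <= (q - p) / m.
Proof.
  intros Hm Hpq.
  rewrite <- ln_div by lra.
  eapply Rle_trans; [apply ln_le_sub_1; apply Rdiv_lt_0_compat; lra|].
  replace (q / p - 1) with ((q - p) / p) by (field; lra).
  unfold Rdiv. apply Rmult_le_compat_l; [lra | apply Rinv_le_contravar; lra].
Qed.

Lemma Rabs_ln_sub_le p q m : 0 < m -> m <= p -> m <= q -> Rabs (ln p - ln q) <= Rabs (p - q) / m.
Proof.
  intros Hm Hp Hq. destruct (Rle_or_lt p q) as [H|H].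
  - assert (ln p <= ln q) by (apply ln_le; lra).
    rewrite (Rabs_minus_sym (ln p)), (Rabs_minus_sym p), !Rabs_pos_eq by lra.
    apply ln_sub_le; lra.
  - assert (ln q <= ln p) by (apply ln_le; lra).
    rewrite !Rabs_pos_eq by lra. apply ln_sub_le; lra.
Qed.

Lemma Rabs_neg_ln_abs_sub_le r y m : 0 < m -> m <= 2 - 2 * cos y -> 1 / 2 <= r <= 1 ->
  Rabs (neg_ln_abs 1 y - neg_ln_abs r y) <= 5 * (1 - r) / m.
Proof.
  intros Hm Hy Hr. unfold neg_ln_abs.
  set (D := 2 - 2 * cos y) in *.
  assert (HD : D <= 4) by (unfold D; destruct (COS_bound y); lra).
  replace (1 - 2 * 1 * cos y + 1 ^ 2) with D by (unfold D; ring).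
  replace (1 - 2 * r * cos y + r ^ 2) with ((1 - r) ^ 2 + r * D) by (unfold D; ring).
  replace (- / 2 * ln D - - / 2 * ln ((1 - r) ^ 2 + r * D))
    with (- / 2 * (ln D - ln ((1 - r) ^ 2 + r * D))) by ring.
  rewrite Rabs_mult, (Rabs_left (- / 2)) by lra.
  assert (Hsq : 0 <= (1 - r) ^ 2) by apply pow2_ge_0.
  assert (Hln := Rabs_ln_sub_le D ((1 - r) ^ 2 + r * D) (m / 2)
                   ltac:(lra) ltac:(lra) ltac:(nra)).
  replace (D - ((1 - r) ^ 2 + r * D)) with ((1 - r) * (D - (1 - r))) in Hln by ring.
  rewrite Rabs_mult, (Rabs_pos_eq (1 - r)) in Hln by lra.
  assert (Rabs (D - (1 - r)) <= 4) by (apply Rabs_le; lra).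
  assert (Hbound : (1 - r) * Rabs (D - (1 - r)) / (m / 2) <= 8 * (1 - r) / m).
  { replace (8 * (1 - r) / m) with ((1 - r) * 4 / (m / 2)) by (field; lra).
    apply Rmult_le_compat_r; [apply Rlt_le, Rinv_0_lt_compat; lra | nra]. }
  assert (0 <= (1 - r) / m) by (apply Rdiv_le_0_compat; lra).
  unfold Rdiv in *. lra.
Qed.

Lemma cos_le_cos_between d y : 0 <= d <= PI -> d <= y <= 2 * PI - d -> cos y <= cos d.
Proof.
  intros Hd Hy. destruct (Rle_or_lt y PI) as [H|H].
  - apply cos_decr_1; lra.
  - replace (cos y) with (cos (2 * PI - y)) by (rewrite cos_minus, cos_2PI, sin_2PI; ring).
    apply cos_decr_1; lra.
Qed.

Lemma cos_lt_1 y : 0 < y < 2 * PI -> cos y < 1.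
Proof.
  intros Hy. assert (HPI := PI_RGT_0).
  set (d := Rmin y (2 * PI - y)).
  assert (Hd : 0 < d <= PI /\ d <= y <= 2 * PI - d).
  { unfold d. destruct (Rle_or_lt y (2 * PI - y));
      [rewrite Rmin_left | rewrite Rmin_right]; lra. }
  assert (cos y <= cos d) by (apply cos_le_cos_between; lra).
  assert (cos d < cos 0) by (apply cos_decreasing_1; lra).
  rewrite cos_0 in *. lra.
Qed.

(* The derivatives of C_r converge uniformly on a ball around t avoiding 0 and 2 pi. *)
Lemma derivable_pt_lim_clausen t : 0 < t < 2 * PI -> derivable_pt_lim clausen t (neg_ln_abs 1 t).
Proof.
  intros Ht. assert (HPI := PI_RGT_0).
  set (d := Rmin t (2 * PI - t) / 2).
  assert (Hd : 0 < d) by (unfold d; assert (0 < Rmin t (2 * PI - t)) by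
    (apply Rmin_glb_lt; lra); lra).
  assert (Hd1 := Rmin_l t (2 * PI - t)). assert (Hd2 := Rmin_r t (2 * PI - t)).
  set (m := 2 - 2 * cos d).
  assert (Hm : 0 < m) by (assert (cos d < 1) by (apply cos_lt_1; unfold d in *; lra);
    unfold m; lra).
  set (ball := mkposreal d Hd).
  assert (Hball : forall y, Boule t ball y -> m <= 2 - 2 * cos y).
  { intros y Hy. unfold Boule in Hy. simpl in Hy. apply Rabs_def2 in Hy.
    assert (cos y <= cos d) by (apply cos_le_cos_between; unfold d in *; lra).
    unfold m. lra. }
  apply (CVU_derivable (fun n => clausen_abel (abel_radius n)) (fun n => neg_ln_abs (abel_radius n))
           clausen (neg_ln_abs 1) t ball).
  - intros eps He.
    destruct (archimed_cor1 (eps * m / 5)) as [N [HN HN0]];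
      [apply Rdiv_lt_0_compat; [apply Rmult_lt_0_compat|]; lra|].
    exists N. intros n y Hn Hy.
    assert (Hr := abel_radius_bounds n).
    eapply Rle_lt_trans; [apply (Rabs_neg_ln_abs_sub_le _ y m Hm (Hball y Hy)); lra|].
    assert (Hgap := abel_radius_gap N n HN0 Hn).
    apply (Rmult_lt_reg_r (m / 5)); [lra|].
    replace (5 * (1 - abel_radius n) / m * (m / 5)) with (1 - abel_radius n) by (field; lra).
    lra.
  - intros y _. apply Un_cv_clausen_abel.
  - intros n y _. apply derivable_pt_lim_clausen_abel. assert (h := abel_radius_bounds n). lra.
  - unfold Boule. simpl. rewrite Rminus_diag, Rabs_R0. lra.
Qed.

Lemma neg_ln_abs_1 y : neg_ln_abs 1 y = - / 2 * ln (2 - 2 * cos y).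
Proof. unfold neg_ln_abs. do 2 f_equal. ring. Qed.

Lemma inv_abs_expi_minus1 y : 0 < y < 2 * PI -> / abs_expi_minus1 y = exp (neg_ln_abs 1 y).
Proof.
  intros Hy. unfold abs_expi_minus1. rewrite neg_ln_abs_1.
  assert (Hc := cos_lt_1 y Hy).
  replace ((cos y - 1) ^ 2 + sin y ^ 2) with (2 - 2 * cos y)
    by (assert (e := sin2_cos2 y); unfold Rsqr in e; simpl; nra).
  set (D := 2 - 2 * cos y). assert (HD : 0 < D) by (unfold D; lra).
  rewrite <- (exp_ln (sqrt D)) by (apply sqrt_lt_R0; lra).
  rewrite <- exp_Ropp. f_equal.
  assert (ln (sqrt D) + ln (sqrt D) = ln D)
    by (rewrite <- ln_mult, sqrt_sqrt by (try apply sqrt_lt_R0; lra); reflexivity).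
  lra.
Qed.

Lemma neg_ln_abs_ge y : 0 < y < 2 * PI -> - ln 2 <= neg_ln_abs 1 y.
Proof.
  intros Hy. rewrite neg_ln_abs_1.
  assert (h := cos_lt_1 y Hy). destruct (COS_bound y).
  assert (ln (2 - 2 * cos y) <= ln (2 * 2)) by (apply ln_le; lra).
  rewrite ln_mult in H1 by lra. lra.
Qed.

Lemma neg_ln_abs_ge_neg_ln y : 0 < y <= PI / 2 -> - ln y <= neg_ln_abs 1 y.
Proof.
  intros Hy. assert (HPI := PI_RGT_0). rewrite neg_ln_abs_1.
  assert (h1 := cos_lt_1 y ltac:(lra)).
  assert (h2 : 1 - y ^ 2 / 2 <= cos y).
  { destruct (cos_bound y 0 ltac:(lra) ltac:(lra)) as [H _].
    unfold cos_approx, cos_term in H. simpl in H. lra. }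
  assert (ln (2 - 2 * cos y) <= ln (y * y)) by (apply ln_le; [lra | nra]).
  rewrite ln_mult in H by lra. lra.
Qed.

(* |1 - e^{i(m+t)}|^2 |1 - e^{i(m-t)}|^2 = 4 (cos t - cos m)^2 <= |1 - e^{im}|^4 *)
Lemma neg_ln_abs_midpoint_convex m t : 0 <= t -> 0 < m - t -> m + t < 2 * PI ->
  2 * neg_ln_abs 1 m <= neg_ln_abs 1 (m + t) + neg_ln_abs 1 (m - t).
Proof.
  intros H1 H2 H3. assert (HPI := PI_RGT_0). rewrite !neg_ln_abs_1.
  assert (Hp1 := cos_lt_1 (m + t) ltac:(lra)).
  assert (Hp2 := cos_lt_1 (m - t) ltac:(lra)).
  assert (Hp := cos_lt_1 m ltac:(lra)).
  assert (Hc : cos m <= cos t) by (apply cos_le_cos_between; destruct (Rle_or_lt t PI); lra).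
  assert (Hct : cos t <= 1) by apply COS_bound.
  assert (Hprod : (2 - 2 * cos (m + t)) * (2 - 2 * cos (m - t)) = 4 * (cos t - cos m) ^ 2).
  { rewrite cos_plus, cos_minus.
    assert (e1 := sin2_cos2 t). assert (e2 := sin2_cos2 m). unfold Rsqr in e1, e2. nra. }
  assert (Key : (2 - 2 * cos (m + t)) * (2 - 2 * cos (m - t)) <= (2 - 2 * cos m) * (2 - 2 * cos m))
    by (rewrite Hprod; nra).
  apply ln_le in Key; [|apply Rmult_lt_0_compat; lra].
  rewrite !ln_mult in Key by lra. lra.
Qed.

(** * Estimates for Cl_2 *)

Lemma is_derive_clausen y : 0 < y < 2 * PI -> is_derive clausen y (neg_ln_abs 1 y).
Proof. intros Hy. apply is_derive_Reals, derivable_pt_lim_clausen, Hy. Qed.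

Lemma clausen_midpoint_ge m a : 0 <= a -> 0 < m - a -> m + a < 2 * PI ->
  2 * a * neg_ln_abs 1 m <= clausen (m + a) - clausen (m - a).
Proof.
  intros Ha H1 H2.
  assert (Hmvt : 2 * neg_ln_abs 1 m * (a - 0)
      <= (clausen (m + a) - clausen (m - a)) - (clausen (m + 0) - clausen (m - 0))).
  { apply (is_derive_lower_bound (fun t => clausen (m + t) - clausen (m - t))
      (fun t => neg_ln_abs 1 (m + t) + neg_ln_abs 1 (m - t))); [exact Ha | |];
      intros t Ht.
    - assert (D1 := is_derive_clausen (m + t) ltac:(lra)).
      assert (D2 := is_derive_clausen (m - t) ltac:(lra)).
      auto_derive.
      + repeat split; eexists; eauto.
      + replace (m + - t) with (m - t) by ring.
        assert (E1 : Derive (fun x : R => clausen x) (m + t) = neg_ln_abs 1 (m + t))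
          by (apply is_derive_unique; exact D1).
        assert (E2 : Derive (fun x : R => clausen x) (m - t) = neg_ln_abs 1 (m - t))
          by (apply is_derive_unique; exact D2).
        rewrite E1, E2. ring.
    - apply neg_ln_abs_midpoint_convex; lra. }
  rewrite Rplus_0_r, !Rminus_0_r in Hmvt. lra.
Qed.

Fixpoint sum_1_to (M : nat) (g : nat -> R) : R :=
  match M with O => 0 | S k => sum_1_to k g + g (S k) end.

Lemma sum_neg_ln_abs_le_clausen h M : 0 < h -> INR M * h + h / 2 < 2 * PI ->
  h * sum_1_to M (fun j => neg_ln_abs 1 (INR j * h))
    <= clausen (INR M * h + h / 2) - clausen (h / 2).
Proof.
  intros Hh. induction M as [|M IH]; intros HM; cbn [sum_1_to].
  - replace (INR 0 * h + h / 2) with (h / 2) by (simpl; ring). lra.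
  - rewrite S_INR in *. assert (Hp := pos_INR M).
    assert (Hmid := clausen_midpoint_ge ((INR M + 1) * h) (h / 2) ltac:(lra) ltac:(nra) ltac:(lra)).
    replace ((INR M + 1) * h - h / 2) with (INR M * h + h / 2) in Hmid by field.
    specialize (IH ltac:(lra)). lra.
Qed.

Lemma clausen_sub_ge t a : 0 <= a -> 0 < t - a -> t < 2 * PI ->
  - ln 2 * a <= clausen t - clausen (t - a).
Proof.
  intros Ha H1 H2.
  replace (- ln 2 * a) with (- ln 2 * (t - (t - a))) by ring.
  apply (is_derive_lower_bound clausen (neg_ln_abs 1)); [lra | |];
    intros s Hs; [apply is_derive_clausen | apply neg_ln_abs_ge]; lra.
Qed.

Lemma Rabs_sin_le u : 0 <= u -> Rabs (sin u) <= u.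
Proof.
  intros Hu. destruct (Rle_lt_or_eq_dec 0 u Hu) as [H|<-].
  - assert (sin u < u) by (apply sin_lt_x; exact H).
    destruct (Rle_or_lt u PI) as [H1|H1].
    + rewrite Rabs_pos_eq by (apply sin_ge_0; lra). lra.
    + assert (HP := PI2_1). destruct (SIN_bound u). apply Rabs_le. lra.
  - rewrite sin_0, Rabs_R0. lra.
Qed.

Lemma Rabs_clausen_term_le_mul y k : 0 <= y -> Rabs (clausen_term y k) <= y.
Proof.
  intros Hy. unfold clausen_term.
  assert (hk := INR_S_ge_1 k).
  assert (Hs := Rabs_sin_le (INR (S k) * y) ltac:(nra)).
  unfold Rdiv. rewrite Rabs_mult, Rabs_inv, (Rabs_pos_eq (INR (S k) ^ 2)) by (apply pow_le; lra).
  apply (Rmult_le_reg_r (INR (S k) ^ 2)); [apply pow_lt; lra|].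
  rewrite Rmult_assoc, Rinv_l, Rmult_1_r by (apply pow_nonzero; lra).
  assert (0 <= y * INR (S k) * (INR (S k) - 1)) by (apply Rmult_le_pos; [apply Rmult_le_pos|]; lra).
  replace (y * INR (S k) ^ 2) with (INR (S k) * y + y * INR (S k) * (INR (S k) - 1)) by ring.
  lra.
Qed.

Lemma clausen_small eta : 0 < eta ->
  exists d, 0 < d /\ forall e, 0 < e <= d -> Rabs (clausen e) <= eta.
Proof.
  intros He. destruct (clausen_abel_tail_uniform (eta / 2)) as [m Hm]; [lra|].
  assert (hm := INR_S_pos m).
  exists (eta / (2 * INR (S m))). split; [apply Rdiv_lt_0_compat; lra|].
  intros e [He1 He2].
  assert (T := Hm 1 e ltac:(lra)). rewrite clausen_abel_1, abel_term_1 in T.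
  assert (Hsum : Rabs (sum_f_R0 (clausen_term e) m) <= INR (S m) * e)
    by (apply Rabs_sum_f_R0_le; intros k _; apply Rabs_clausen_term_le_mul; lra).
  assert (INR (S m) * e <= eta / 2).
  { replace (eta / 2) with (INR (S m) * (eta / (2 * INR (S m)))) by (field; lra).
    apply Rmult_le_compat_l; lra. }
  set (s := sum_f_R0 (clausen_term e) m) in *.
  assert (T' := Rabs_triang (clausen e - s) s).
  replace (clausen e - s + s) with (clausen e) in T' by ring.
  lra.
Qed.

Lemma sq_mul_ln_sq_ge d : 0 < d -> - 2 * d <= d ^ 2 * ln (d ^ 2).
Proof.
  intros Hd.
  assert (Hl := ln_le_sub_1 (/ d) ltac:(apply Rinv_0_lt_compat; lra)).
  rewrite ln_Rinv in Hl by lra.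
  replace (d ^ 2) with (d * d) by ring. rewrite ln_mult by lra.
  assert (d * d * (1 - / d) <= d * d * ln d) by (apply Rmult_le_compat_l; nra).
  replace (d * d * (1 - / d)) with (d * d - d) in H by (field; lra). nra.
Qed.

(* Since Cl_2' = F >= -ln, the function x - x ln x - Cl_2(x) decreases on (0, a],
   and it tends to 0 at 0. *)
Lemma sub_mul_ln_le_clausen a : 0 < a <= PI / 2 -> a - a * ln a <= clausen a.
Proof.
  intros Ha. assert (HPI := PI_RGT_0).
  apply Rle_plus_epsilon. intros eta Heta.
  destruct (clausen_small (eta / 3)) as [e0 [He0 Hsmall]]; [lra|].
  set (d := Rmin (Rmin 1 (eta / 6)) (Rmin e0 a)).
  assert (Hd : 0 < d <= 1 /\ d <= eta / 6 /\ d <= e0 /\ d <= a).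
  { assert (H1 := Rmin_l (Rmin 1 (eta / 6)) (Rmin e0 a)).
    assert (H2 := Rmin_r (Rmin 1 (eta / 6)) (Rmin e0 a)).
    assert (Rmin 1 (eta / 6) <= 1 /\ Rmin 1 (eta / 6) <= eta / 6) by
      (split; [apply Rmin_l | apply Rmin_r]).
    assert (Rmin e0 a <= e0 /\ Rmin e0 a <= a) by (split; [apply Rmin_l | apply Rmin_r]).
    assert (0 < d) by (unfold d; repeat apply Rmin_glb_lt; lra).
    fold d in H1, H2. lra. }
  set (e := d ^ 2).
  assert (He : 0 < e <= d) by (unfold e; split; nra).
  assert (Hmono : 0 * (a - e) <= (clausen a - a + a * ln a) - (clausen e - e + e * ln e)).
  { apply (is_derive_lower_bound (fun x => clausen x - x + x * ln x)
             (fun x => neg_ln_abs 1 x + ln x)); [lra | |]; intros x Hx.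
    - assert (D := is_derive_clausen x ltac:(lra)).
      auto_derive.
      + repeat split; [eexists; eauto | lra].
      + rewrite (is_derive_unique (fun x : R => clausen x) _ _ D). field. lra.
    - assert (H := neg_ln_abs_ge_neg_ln x ltac:(lra)). lra. }
  assert (Hcl := Hsmall e ltac:(lra)).
  assert (Hneg := Rle_abs (- clausen e)). rewrite Rabs_Ropp in Hneg.
  assert (Hln := sq_mul_ln_sq_ge d ltac:(lra)). fold e in Hln.
  lra.
Qed.

Lemma mul_sum_neg_ln_abs_le h M : 0 < h <= PI -> INR (S M) * h < 2 * PI ->
  h * sum_1_to M (fun j => neg_ln_abs 1 (INR j * h))
    <= clausen (INR (S M) * h) - h / 2 + h / 2 * ln h.
Proof.
  intros Hh HM. rewrite S_INR in *. assert (Hp := pos_INR M).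
  assert (Hcells := sum_neg_ln_abs_le_clausen h M ltac:(lra) ltac:(lra)).
  assert (Hlast := clausen_sub_ge ((INR M + 1) * h) (h / 2) ltac:(lra) ltac:(nra) HM).
  replace ((INR M + 1) * h - h / 2) with (INR M * h + h / 2) in Hlast by field.
  assert (Hfirst := sub_mul_ln_le_clausen (h / 2) ltac:(lra)).
  rewrite ln_div in Hfirst by lra.
  lra.
Qed.

Lemma neg_ln_abs_double y : 0 < y < PI -> neg_ln_abs 1 (2 * y) = - ln 2 - ln (sin y).
Proof.
  intros Hy. assert (Hs := sin_gt_0 y ltac:(lra) ltac:(lra)).
  rewrite neg_ln_abs_1, cos_2a_sin.
  replace (2 - 2 * (1 - 2 * sin y * sin y)) with (2 * 2 * (sin y * sin y)) by ring.
  rewrite !ln_mult by nra. lra.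
Qed.

(* Otherwise cos (8/5) >= 0, contradicting its degree-8 Taylor upper bound. *)
Lemma PI_lt_16_5 : PI < 16 / 5.
Proof.
  apply Rnot_le_lt. intro H.
  assert (H1 := cos_ge_0 (8 / 5) ltac:(lra) ltac:(lra)).
  destruct (pre_cos_bound (8 / 5) 1 ltac:(lra) ltac:(lra)) as [_ H2].
  unfold cos_approx in H2. cbn [sum_f_R0 Nat.mul Nat.add] in H2. unfold cos_term in H2.
  assert (f0 : INR (Factorial.fact (2 * 0)) = 1) by reflexivity.
  assert (f1 : INR (Factorial.fact (2 * 1)) = 2) by (rewrite INR_IZR_INZ; reflexivity).
  assert (f2 : INR (Factorial.fact (2 * 2)) = 24) by (rewrite INR_IZR_INZ; reflexivity).
  assert (f3 : INR (Factorial.fact (2 * 3)) = 720) by (rewrite INR_IZR_INZ; reflexivity).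
  assert (f4 : INR (Factorial.fact (2 * 4)) = 40320) by (rewrite INR_IZR_INZ; reflexivity).
  rewrite f0, f1, f2, f3, f4 in H2. cbn [Nat.mul Nat.add pow] in H2. lra.
Qed.

(* (16/5)^3 < 2^4 (29/20)^2 and ln (29/20) <= 9/20 *)
Lemma three_ln_lt h : 0 < h < 16 / 5 -> 3 * ln h < 4 * ln 2 + 1.
Proof.
  intros Hh.
  assert (a1 : ln h < ln (16 / 5)) by (apply ln_increasing; lra).
  assert (a2 : ln (29 / 20) <= 9 / 20) by (assert (t := ln_le_sub_1 (29 / 20) ltac:(lra)); lra).
  assert (a3 : 3 * ln (16 / 5) = ln (16 / 5 * (16 / 5) * (16 / 5))) by (rewrite !ln_mult by lra; ring).
  assert (a4 : 4 * ln 2 + 2 * ln (29 / 20) = ln (2 * 2 * 2 * 2 * (29 / 20) * (29 / 20)))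
    by (rewrite !ln_mult by lra; ring).
  assert (ln (16 / 5 * (16 / 5) * (16 / 5)) < ln (2 * 2 * 2 * 2 * (29 / 20) * (29 / 20)))
    by (apply ln_increasing; lra).
  lra.
Qed.

Lemma sum_neg_ln_abs_lt N h : (2 <= N)%nat -> 0 < h -> INR N * h < 2 * PI ->
  sum_1_to N (fun j => neg_ln_abs 1 (INR j * h))
    < ln 2 - ln h - ln (sin (INR N * h / 2)) + clausen (INR N * h) / h.
Proof.
  intros HN Hh Hth. assert (HPI := PI_lt_16_5).
  assert (HNr : 2 <= INR N) by (apply (le_INR 2); exact HN).
  assert (Hhpi : h < PI) by nra.
  destruct N as [|M]; [lia|]. cbn [sum_1_to].
  assert (Hsum := mul_sum_neg_ln_abs_le h M ltac:(lra) Hth).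
  set (Cl := clausen (INR (S M) * h)) in *.
  assert (Hsum' : sum_1_to M (fun j => neg_ln_abs 1 (INR j * h)) <= Cl / h - / 2 + ln h / 2).
  { apply (Rmult_le_reg_l h); [lra|].
    replace (h * (Cl / h - / 2 + ln h / 2)) with (Cl - h / 2 + h / 2 * ln h) by (field; lra).
    exact Hsum. }
  assert (Hln := three_ln_lt h ltac:(lra)).
  assert (HF := neg_ln_abs_double (INR (S M) * h / 2) ltac:(nra)).
  replace (2 * (INR (S M) * h / 2)) with (INR (S M) * h) in HF by field.
  lra.
Qed.

Lemma prod_1_to_exp M f g : (forall j, (1 <= j <= M)%nat -> f j = exp (g j)) ->
  prod_1_to M f = exp (sum_1_to M g).
Proof.
  induction M as [|M IH]; intros H; simpl.
  - rewrite exp_0. reflexivity.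
  - rewrite IH by (intros; apply H; lia). rewrite H, exp_plus by lia. reflexivity.
Qed.

Theorem proposition3p2 (N : nat) (theta : R) :
  (2 <= N)%nat -> 0 < theta -> theta < 2 * PI ->
  exists Cl2 : R,
    infinite_sum (clausen_term theta) Cl2 /\
    prod_1_to N (fun j => / abs_expi_minus1 (INR j * theta / INR N))
      < 2 * INR N / (theta * sin (theta / 2))
        * exp (INR N * Cl2 / theta).
Proof.
  intros HN Ht1 Ht2. exists (clausen theta). split; [apply infinite_sum_clausen_term|].
  assert (HNr : 2 <= INR N) by (apply (le_INR 2); exact HN).
  set (h := theta / INR N).
  assert (Hh : 0 < h) by (apply Rdiv_lt_0_compat; lra).
  assert (Hth : INR N * h = theta) by (unfold h; field; lra).
  rewrite (prod_1_to_exp N _ (fun j => neg_ln_abs 1 (INR j * h))).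
  2: { intros j Hj. replace (INR j * theta / INR N) with (INR j * h) by (unfold h; field; lra).
       apply inv_abs_expi_minus1.
       assert (1 <= INR j <= INR N) by (split; [apply (le_INR 1) | apply le_INR]; lia). nra. }
  assert (Hs : 0 < sin (theta / 2)) by (apply sin_gt_0; lra).
  rewrite <- (exp_ln (2 * INR N / (theta * sin (theta / 2)))), <- exp_plus
    by (apply Rdiv_lt_0_compat; nra).
  apply exp_increasing.
  rewrite ln_div, !ln_mult by nra.
  replace (INR N * clausen theta / theta) with (clausen theta / h) by (unfold h; field; lra).
  assert (Hlnh : ln h = ln theta - ln (INR N)) by (apply ln_div; lra).
  assert (Hkey := sum_neg_ln_abs_lt N h HN Hh ltac:(lra)). rewrite Hth in Hkey.
  lra.
Qed.
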